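(* Let $K\ge1$, $T\ge1$, let $\ell_1,\dots,\ell_T\in[0,1]^K$ be arbitrary loss vectors. The regret of FlipFlop with parameters $\phi=2.37$ and $\alpha=1.243$ is simultaneously bounded by \[ \mathcal{R}^{\mathrm{ff}}_T\le 5.64\,\mathcal{R}^{\mathrm{ftl}}_T+4.64, \qquad \mathcal{R}^{\mathrm{ff}}_T\le 5.64\sqrt{\frac{L_T^*(T-L_T^* )}{T}\ln K}+35.53\ln K+7.78\sqrt{\ln K}+7.54. \]
   Context: Hedge setting: $K$ experts; in round $t$ the learner chooses a probability vector $w_t$, then $\ell_t$ is revealed and the learner suffers $h_t=\sum_kw_{t,k}\ell_{t,k}$. Write $L_{t,k}=\sum_{s=1}^t\ell_{s,k}$ ($L_{0,k}=0$), $L^*_t=\min_kL_{t,k}$, $H_T=\sum_{t\le T}h_t$, regret $\mathcal{R}_T=H_T-L^*_T$. Exponential weights with learning rate $\eta\in(0,\infty]$ at time $t$: $w_{t,k}=e^{-\eta L_{t-1,k}}/\sum_je^{-\eta L_{t-1,j}}$ if $\eta<\infty$; for $\eta=\infty$, $w_t$ is uniform on $\{k:L_{t-1,k}=L^*_{t-1}\}$. With learning rate $\eta_t$ in round $t$: mix loss $m_t=-\frac1{\eta_t}\ln\sum_kw_{t,k}e^{-\eta_t\ell_{t,k}}$ if $\eta_t<\infty$, $m_t=L^*_t-L^*_{t-1}$ if $\eta_t=\infty$; mixability gap $\delta_t=h_t-m_t$. Follow-the-Leader (FTL) uses $\eta_t=\infty$ in every round; $\mathcal{R}^{\mathrm{ftl}}_T$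 is its regret. FlipFlop with parameters $\phi>1,\alpha>0$: keeps accumulators $\overline{\Delta}$ (flip) and $\underline{\Delta}$ (flop), both initially $0$, starting in the flip regime. In round $t$: flip regime uses $\eta_t=\infty$; flop regime uses $\eta_t=\ln K/\underline{\Delta}_{t-1}$ ($=\infty$ if $\underline{\Delta}_{t-1}=0$); weights are exponential weights with learning rate $\eta_t$ from the cumulative losses $L_{t-1}$ over all rounds. After round $t$, $\delta_t$ is added to the current regime's accumulator. If in flip and $\overline{\Delta}_t>(\phi/\alpha)\underline{\Delta}_t$, switch to flop for round $t+1$; if in flop and $\underline{\Delta}_t>\alpha\overline{\Delta}_t$, switch to flip for round $t+1$. $\mathcal{R}^{\mathrm{ff}}_T$ is the regret of FlipFlop. *)

From Stdlib Require Import Reals Lra Lia List.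
Import ListNotations.
Open Scope R_scope.

(* Experts are indexed 0..K-1; rounds are indexed 1..T.
   [loss t k] is the loss ell_{t,k} of expert k in round t. *)

Definition sumK (K : nat) (f : nat -> R) : R :=
  fold_right Rplus 0 (map f (seq 0 K)).

(* minimum over experts k < K (K >= 1 assumed where used) *)
Definition minK (K : nat) (f : nat -> R) : R :=
  fold_right Rmin (f 0%nat) (map f (seq 0 K)).

Fixpoint cumL (loss : nat -> nat -> R) (t : nat) (k : nat) : R :=
  match t with
  | O => 0
  | S t' => cumL loss t' k + loss t k
  end.

Definition Lstar (K : nat) (loss : nat -> nat -> R) (t : nat) : R :=
  minK K (cumL loss t).

(* Learning rates: [None] encodes eta = +infinity, [Some e] a finite eta. *)
Definition lrate := option R.

Definition ew_weight (K : nat) (eta : lrate) (Lprev : nat -> R) (k : nat) : R :=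
  match eta with
  | None =>
      let isLeader := fun j => if Req_EM_T (Lprev j) (minK K Lprev) then 1 else 0 in
      isLeader k / sumK K isLeader
  | Some e =>
      exp (- e * Lprev k) / sumK K (fun j => exp (- e * Lprev j))
  end.

Definition hloss (K : nat) (loss : nat -> nat -> R) (eta : lrate) (t : nat) : R :=
  sumK K (fun k => ew_weight K eta (cumL loss (t - 1)) k * loss t k).

(* mix loss m_t.  For eta = 0 (only possible when ln K = 0) we use the
   limiting value m_t = h_t. *)
Definition mixloss (K : nat) (loss : nat -> nat -> R) (eta : lrate) (t : nat) : R :=
  match eta with
  | None => Lstar K loss t - Lstar K loss (t - 1)
  | Some e =>
      if Req_EM_T e 0 then hloss K loss eta t
      else - (1 / e) * ln (sumK K (fun k =>
               ew_weight K eta (cumL loss (t - 1)) k * exp (- e * loss t k)))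
  end.

Definition mixgap (K : nat) (loss : nat -> nat -> R) (eta : lrate) (t : nat) : R :=
  hloss K loss eta t - mixloss K loss eta t.

(* FlipFlop state after n rounds: (in_flip_regime, flip accumulator,
   flop accumulator); the regime component is the regime for round n+1. *)
Record ffstate := FFState { ff_flip : bool; ff_dflip : R; ff_dflop : R }.

Definition ff_eta (K : nat) (s : ffstate) : lrate :=
  if ff_flip s then None
  else if Req_EM_T (ff_dflop s) 0 then None
  else Some (ln (INR K) / ff_dflop s).

Fixpoint ff_state (K : nat) (phi alpha : R) (loss : nat -> nat -> R) (n : nat)
  : ffstate :=
  match n with
  | O => FFState true 0 0
  | S n' =>
      let s := ff_state K phi alpha loss n' in
      let d := mixgap K loss (ff_eta K s) n in
      if ff_flip s then
        let df := ff_dflip s + d in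
        if Rlt_dec ((phi / alpha) * ff_dflop s) df
        then FFState false df (ff_dflop s)
        else FFState true df (ff_dflop s)
      else
        let dl := ff_dflop s + d in
        if Rlt_dec (alpha * ff_dflip s) dl
        then FFState true (ff_dflip s) dl
        else FFState false (ff_dflip s) dl
  end.

Definition ff_rate (K : nat) (phi alpha : R) (loss : nat -> nat -> R) (t : nat)
  : lrate := ff_eta K (ff_state K phi alpha loss (t - 1)).

Definition sumT (T : nat) (f : nat -> R) : R :=
  fold_right Rplus 0 (map f (seq 1 T)).

Definition regret_ff (K : nat) (phi alpha : R) (loss : nat -> nat -> R) (T : nat) : R :=
  sumT T (fun t => hloss K loss (ff_rate K phi alpha loss t) t) - Lstar K loss T.

Definition regret_ftl (K : nat) (loss : nat -> nat -> R) (T : nat) : R :=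
  sumT T (fun t => hloss K loss None t) - Lstar K loss T.

From Stdlib Require Import Reals Lra Lia List Factorial.
Open Scope R_scope.

(* FlipFlop's regret is its mix loss minus [L*_T] plus the accumulated mixability gaps
   [Delta^flip + Delta^flop].  The mix loss telescopes in the exponential-weights potential
   [Phi_eta(L) = -(1/eta) ln((1/K) sum_k exp(-eta L_k))], which lies in [[L*, L* + ln K / eta]]
   and is nonincreasing in [eta]; since the flop rate [ln K / Delta^flop] only decreases during
   a flop phase, the mix loss exceeds [L*_T] by at most a constant times [Delta^flop].  The
   switching rule keeps [Delta^flip] and [Delta^flop] within constant factors of each other, up
   to an additive [1] (the largest single gap).  As [Delta^flip] consists of FTL gaps, this gives
   the first bound.  For the second, Bernstein's inequality bounds a flop gap by
   [eta h_t (1 - h_t) / (2 (1 - eta/3))]; at [eta = ln K / Delta^flop] this yields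
   [(Delta^flop)^2 <= ln K sum_t h_t (1 - h_t) + (2 ln K / 3 + 1) Delta^flop], and
   [sum_t h_t (1 - h_t) <= L*_T (T - L*_T) / T + R^ff], so solving the quadratic gives the bound. *)

(** * Elementary real inequalities *)

Lemma exp_le_compat x y : x <= y -> exp x <= exp y.
Proof. intros [Hlt | ->]; [left; apply exp_increasing | right]; auto. Qed.

Lemma ln_le_compat x y : 0 < x -> x <= y -> ln x <= ln y.
Proof. intros Hx [Hlt | ->]; [left; apply ln_increasing | right]; auto. Qed.

Lemma ln_le_sub1 x : 0 < x -> ln x <= x - 1.
Proof.
  intros Hx. rewrite <- (ln_exp (x - 1)). apply ln_le_compat; auto.
  pose proof (exp_ineq1_le (x - 1)). lra.
Qed.

Lemma Un_cv_const (c : R) : Un_cv (fun _ => c) c.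
Proof. intros e He; exists 0%nat; intros; rewrite R_dist_eq; lra. Qed.

Lemma exp_series_term_nonneg x n : 0 <= x -> 0 <= / INR (fact n) * x ^ n.
Proof.
  intros Hx. apply Rmult_le_pos; [apply Rlt_le, Rinv_0_lt_compat, INR_fact_lt_0 | apply pow_le, Hx].
Qed.

(* The Taylor tail of [exp x] is dominated by a geometric series of ratio [x/3],
   because [n! >= 2 * 3 ^ (n - 2)]. *)
Lemma exp_le_bernstein x : 0 <= x < 3 -> exp x <= 1 + x + x ^ 2 / (2 * (1 - x / 3)).
Proof.
  intros [Hx0 Hx3].
  set (q := 1 - x / 3). set (r := x / (3 * q)). set (U := 1 + x + x ^ 2 / (2 * q)).
  assert (Hq : 0 < q) by (unfold q; lra).
  assert (Hr : 0 <= r) by (apply Rle_mult_inv_pos; lra).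
  pose proof (fun n => exp_series_term_nonneg x n Hx0) as Hterm.
  assert (Htail : forall n, (2 <= n)%nat -> E1 x n + / INR (fact n) * x ^ n * r <= U).
  { induction 1 as [|m Hm IH].
    - unfold E1, U, r, q; simpl. right. field. lra.
    - set (t := / INR (fact m) * x ^ m) in *.
      assert (Hm3 : 3 <= INR (S m)) by (replace 3 with (INR 3) by (simpl; lra); apply le_INR; lia).
      assert (Hnext : / INR (fact (S m)) * x ^ S m = t * (x / INR (S m))).
      { unfold t. rewrite fact_simpl, mult_INR. simpl pow.
        pose proof (INR_fact_lt_0 m). field. lra. }
      assert (Hratio : x / INR (S m) * (1 + r) <= r).
      { unfold r. apply Rmult_le_reg_r with (3 * q * INR (S m)); [nra|].
        field_simplify; unfold q in *; nra. }
      change (E1 x (S m)) with (E1 x m + / INR (fact (S m)) * x ^ S m).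
      rewrite Hnext. pose proof (Hterm m) as Ht. fold t in Ht. nra. }
  assert (Hpartial : forall n, E1 x n <= U).
  { intro n. destruct (Nat.le_gt_cases 2 n) as [Hn|Hn].
    - pose proof (Htail n Hn). pose proof (Rmult_le_pos _ _ (Hterm n) Hr). lra.
    - assert (0 <= x ^ 2 / (2 * q)) by (apply Rle_mult_inv_pos; nra).
      assert (n = 0 \/ n = 1)%nat as [-> | ->] by lia; unfold E1, U; simpl; lra. }
  exact (Rle_cv_lim Hpartial (E1_cvg x) (Un_cv_const U)).
Qed.

Lemma exp_ge_cubic y : 0 <= y -> 1 + y + y ^ 2 / 2 + y ^ 3 / 6 <= exp y.
Proof.
  intros Hy.
  pose proof (sum_incr _ 3 _ (E1_cvg y) (fun n => exp_series_term_nonneg y n Hy)) as Hsum.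
  simpl in Hsum. lra.
Qed.

Lemma exp_le_quadratic_nonpos x : x <= 0 -> exp x <= 1 + x + x ^ 2 / 2.
Proof.
  intros Hx. pose proof (exp_ge_cubic (- x) ltac:(lra)) as Hcubic.
  rewrite <- (Ropp_involutive x) at 1. rewrite exp_Ropp.
  apply Rmult_le_reg_r with (exp (- x)); [apply exp_pos|].
  rewrite Rinv_l by apply exp_neq_0.
  apply Rle_trans with ((1 + x + x ^ 2 / 2) * (1 - x + x ^ 2 / 2 - x ^ 3 / 6)); [nra|].
  apply Rmult_le_compat_l; [nra|].
  replace (1 - x + x ^ 2 / 2 - x ^ 3 / 6) with (1 + - x + (- x) ^ 2 / 2 + (- x) ^ 3 / 6) by field.
  exact Hcubic.
Qed.

Lemma exp_le_bernstein_upto e x : 0 < e < 3 -> x <= e ->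
  exp x <= 1 + x + x ^ 2 / (2 * (1 - e / 3)).
Proof.
  intros He Hx.
  assert (Hden : / (2 * (1 - e / 3)) >= / 2) by (apply Rle_ge, Rinv_le_contravar; lra).
  destruct (Rle_dec x 0) as [Hn | Hp].
  - eapply Rle_trans; [apply exp_le_quadratic_nonpos; auto|]. unfold Rdiv. nra.
  - eapply Rle_trans; [apply exp_le_bernstein; lra|]. unfold Rdiv.
    assert (/ (2 * (1 - x / 3)) <= / (2 * (1 - e / 3))) by (apply Rinv_le_contravar; lra).
    nra.
Qed.

Lemma exp_ge_tangent m x : exp m * (1 + (x - m)) <= exp x.
Proof.
  replace (exp x) with (exp m * exp (x - m)) by (rewrite <- exp_plus; f_equal; ring).
  apply Rmult_le_compat_l; [left; apply exp_pos | apply exp_ineq1_le].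
Qed.

Lemma exp_le_chord p z : 0 <= p <= 1 -> exp (p * z) <= 1 + p * (exp z - 1).
Proof.
  intros Hp.
  pose proof (exp_ge_tangent (p * z) z) as Hz.
  pose proof (exp_ge_tangent (p * z) 0) as H0. rewrite exp_0 in H0.
  nra.
Qed.

Lemma bernstein_rescale G lam d v : 0 < G ->
  d * (1 - lam / G / 3) <= lam / G * v / 2 -> 2 * G * d <= lam * v + 2 * lam / 3 * d.
Proof.
  intros HG Hb. apply Rmult_le_compat_l with (r := 2 * G) in Hb; [|lra].
  replace (2 * G * (d * (1 - lam / G / 3))) with (2 * G * d - 2 * lam / 3 * d) in Hb
    by (field; lra).
  replace (2 * G * (lam / G * v / 2)) with (lam * v) in Hb by (field; lra).
  lra.
Qed.

Lemma sqrt_add_le x y : 0 <= x -> 0 <= y -> sqrt (x + y) <= sqrt x + sqrt y.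
Proof.
  intros Hx Hy. pose proof (sqrt_pos x). pose proof (sqrt_pos y).
  rewrite <- (sqrt_pow2 (sqrt x + sqrt y)) by lra. apply sqrt_le_1_alt.
  pose proof (sqrt_sqrt x Hx). pose proof (sqrt_sqrt y Hy). nra.
Qed.

Lemma quadratic_root_bound G p q : 0 <= p -> 0 <= q -> G ^ 2 <= p + q * G -> G <= q + sqrt p.
Proof.
  intros Hp Hq HG. pose proof (sqrt_pos p). pose proof (sqrt_sqrt p Hp).
  destruct (Rle_dec G (q + sqrt p)) as [|Hgt]; [auto|].
  assert (G * G > (q + sqrt p) * G) by (apply Rmult_lt_compat_r; lra). nra.
Qed.

(** * Finite sums *)

Definition lsum {A} (l : list A) (f : A -> R) : R := fold_right Rplus 0 (map f l).

Lemma lsum_ext {A} (l : list A) f g : (forall x, In x l -> f x = g x) -> lsum l f = lsum l g.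
Proof.
  unfold lsum. induction l as [|a l IH]; intros H; simpl; [reflexivity|].
  f_equal; [apply H; left | apply IH; intros; apply H; right]; auto.
Qed.

Lemma lsum_le {A} (l : list A) f g : (forall x, In x l -> f x <= g x) -> lsum l f <= lsum l g.
Proof.
  unfold lsum. induction l as [|a l IH]; intros H; simpl; [lra|].
  apply Rplus_le_compat; [apply H; left | apply IH; intros; apply H; right]; auto.
Qed.

Lemma lsum_plus {A} (l : list A) f g : lsum l (fun x => f x + g x) = lsum l f + lsum l g.
Proof. unfold lsum. induction l as [|a l IH]; simpl; [ring|]. rewrite IH; ring. Qed.

Lemma lsum_scal {A} (l : list A) c f : lsum l (fun x => c * f x) = c * lsum l f.
Proof. unfold lsum. induction l as [|a l IH]; simpl; [ring|]. rewrite IH; ring. Qed.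

Lemma lsum_const {A} (l : list A) c : lsum l (fun _ => c) = INR (length l) * c.
Proof.
  unfold lsum. induction l as [|a l IH]; simpl length; [simpl; ring|].
  rewrite S_INR. simpl. rewrite IH. ring.
Qed.

Lemma lsum_nonneg {A} (l : list A) f : (forall x, In x l -> 0 <= f x) -> 0 <= lsum l f.
Proof.
  intros H. apply Rle_trans with (lsum l (fun _ => 0)); [rewrite lsum_const; lra|].
  apply lsum_le, H.
Qed.

Lemma lsum_ge_term {A} (l : list A) f y :
  (forall x, In x l -> 0 <= f x) -> In y l -> f y <= lsum l f.
Proof.
  induction l as [|a l IH]; intros H Hy; [destruct Hy|].
  change (lsum (a :: l) f) with (f a + lsum l f).
  assert (Ha : 0 <= f a) by (apply H; simpl; auto).
  assert (Hl : 0 <= lsum l f) by (apply lsum_nonneg; intros; apply H; simpl; auto).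
  destruct Hy as [<- | Hy]; [lra|].
  assert (f y <= lsum l f) by (apply IH; auto; intros; apply H; simpl; auto). lra.
Qed.

Lemma lsum_app {A} (l1 l2 : list A) f : lsum (l1 ++ l2) f = lsum l1 f + lsum l2 f.
Proof. unfold lsum. induction l1 as [|a l1 IH]; simpl; [ring | rewrite IH; ring]. Qed.

Section SumOverExperts.
Variable K : nat.

Lemma in_experts k : In k (seq 0 K) <-> (k < K)%nat.
Proof. rewrite in_seq. lia. Qed.

Lemma sumK_ext f g : (forall k, (k < K)%nat -> f k = g k) -> sumK K f = sumK K g.
Proof. intros H. apply (lsum_ext (seq 0 K)). intros k Hk%in_experts. auto. Qed.

Lemma sumK_le f g : (forall k, (k < K)%nat -> f k <= g k) -> sumK K f <= sumK K g.
Proof. intros H. apply (lsum_le (seq 0 K)). intros k Hk%in_experts. auto. Qed.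

Lemma sumK_ge_term f j :
  (forall k, (k < K)%nat -> 0 <= f k) -> (j < K)%nat -> f j <= sumK K f.
Proof.
  intros H Hj. apply (lsum_ge_term (seq 0 K)); [|apply in_experts; auto].
  intros k Hk%in_experts. auto.
Qed.

Lemma sumK_plus f g : sumK K (fun k => f k + g k) = sumK K f + sumK K g.
Proof. apply lsum_plus. Qed.

Lemma sumK_scal c f : sumK K (fun k => c * f k) = c * sumK K f.
Proof. apply lsum_scal. Qed.

Lemma sumK_const c : sumK K (fun _ => c) = INR K * c.
Proof. unfold sumK. change (lsum (seq 0 K) (fun _ => c) = INR K * c).
  rewrite lsum_const, length_seq. reflexivity. Qed.

Lemma sumK_exp_pos (x : nat -> R) : (1 <= K)%nat -> 0 < sumK K (fun k => exp (x k)).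
Proof.
  intros HK. apply Rlt_le_trans with (exp (x 0%nat)); [apply exp_pos|].
  apply (sumK_ge_term (fun k => exp (x k))); [intros; left; apply exp_pos | lia].
Qed.

Lemma minK_le f k : (k < K)%nat -> minK K f <= f k.
Proof.
  intros Hk. unfold minK. assert (Hin : In (f k) (map f (seq 0 K))).
  { apply in_map, in_experts, Hk. }
  generalize (f 0%nat). induction (map f (seq 0 K)) as [|a l IH]; intros b; [destruct Hin|].
  destruct Hin as [-> | Hin]; simpl; [apply Rmin_l|].
  apply Rle_trans with (fold_right Rmin b l); [apply Rmin_r | auto].
Qed.

Lemma minK_attained f : (1 <= K)%nat -> exists j, (j < K)%nat /\ minK K f = f j.
Proof.
  intros HK. unfold minK.
  assert (Hcases : forall (a : R) l, fold_right Rmin a l = a \/ In (fold_right Rmin a l) l).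
  { intros a. induction l as [|b l IH]; simpl; [auto|].
    destruct (Rle_dec b (fold_right Rmin a l)).
    - rewrite Rmin_left by auto. auto.
    - rewrite Rmin_right by lra. destruct IH; auto. }
  destruct (Hcases (f 0%nat) (map f (seq 0 K))) as [Hmin | Hmin].
  - exists 0%nat. split; [lia | auto].
  - apply in_map_iff in Hmin as [j [Hj Hin%in_experts]]. exists j. auto.
Qed.

Lemma minK_glb f c : (1 <= K)%nat -> (forall k, (k < K)%nat -> c <= f k) -> c <= minK K f.
Proof. intros HK H. destruct (minK_attained f HK) as [j [Hj ->]]. auto. Qed.

End SumOverExperts.

Lemma sumT_S T f : sumT (S T) f = sumT T f + f (S T).
Proof.
  unfold sumT. rewrite seq_S.
  change (lsum (seq 1 T ++ (1 + T)%nat :: nil) f = lsum (seq 1 T) f + f (S T)).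
  rewrite lsum_app. unfold lsum at 2. simpl. ring.
Qed.

Lemma sumT_ext T f g : (forall t, (1 <= t <= T)%nat -> f t = g t) -> sumT T f = sumT T g.
Proof. intros H. apply (lsum_ext (seq 1 T)). intros t Ht%in_seq. apply H. lia. Qed.

Lemma sumT_nonneg T f : (forall t, (1 <= t <= T)%nat -> 0 <= f t) -> 0 <= sumT T f.
Proof. intros H. apply (lsum_nonneg (seq 1 T)). intros t Ht%in_seq. apply H. lia. Qed.

Lemma sumT_plus T f g : sumT T (fun t => f t + g t) = sumT T f + sumT T g.
Proof. apply lsum_plus. Qed.

Lemma sumT_scal T c f : sumT T (fun t => c * f t) = c * sumT T f.
Proof. apply lsum_scal. Qed.

Lemma sumT_const T c : sumT T (fun _ => c) = INR T * c.
Proof.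
  change (lsum (seq 1 T) (fun _ => c) = INR T * c). rewrite lsum_const, length_seq. reflexivity.
Qed.

Lemma sumT_variance_le T f : (1 <= T)%nat ->
  sumT T (fun t => f t * (1 - f t)) <= sumT T f - sumT T f ^ 2 / INR T.
Proof.
  intros HT. set (S := sumT T f). set (c := S / INR T).
  assert (HTpos : 0 < INR T) by (apply lt_0_INR; lia).
  assert (Hsq : 0 <= sumT T (fun t => (f t - c) ^ 2))
    by (apply sumT_nonneg; intros; apply pow2_ge_0).
  rewrite (sumT_ext T (fun t => (f t - c) ^ 2)
             (fun t => (- (f t * (1 - f t)) + (1 - 2 * c) * f t) + c ^ 2)) in Hsq by (intros; ring).
  rewrite sumT_plus, sumT_plus, sumT_scal, sumT_const in Hsq.
  rewrite (sumT_ext T (fun t => - (f t * (1 - f t))) (fun t => -1 * (f t * (1 - f t)))) in Hsq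
    by (intros; ring).
  rewrite sumT_scal in Hsq. fold S in Hsq.
  replace (S - S ^ 2 / INR T) with ((1 - 2 * c) * S + INR T * c ^ 2) by (unfold c; field; lra).
  lra.
Qed.

(** * Means under a probability vector *)

Definition prob_vec (K : nat) (w : nat -> R) : Prop :=
  (forall k, (k < K)%nat -> 0 <= w k) /\ sumK K w = 1.

Lemma ew_weight_prob_vec K r L : (1 <= K)%nat -> prob_vec K (ew_weight K r L).
Proof.
  intros HK. destruct r as [e|]; unfold ew_weight; cbv zeta.
  - pose proof (sumK_exp_pos K (fun j => - e * L j) HK) as HZ.
    split.
    + intros k Hk. apply Rle_mult_inv_pos; [left; apply exp_pos | auto].
    + unfold Rdiv.
      rewrite (sumK_ext K _ (fun k => / sumK K (fun j => exp (- e * L j)) * exp (- e * L k)))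
        by (intros; ring).
      rewrite sumK_scal. field. lra.
  - set (I := fun j => if Req_EM_T (L j) (minK K L) then 1 else 0).
    assert (HI : forall j, 0 <= I j) by (intro j; unfold I; destruct Req_EM_T; lra).
    assert (HZ : 0 < sumK K I).
    { destruct (minK_attained K L HK) as [j [Hj Ej]].
      apply Rlt_le_trans with (I j); [unfold I; destruct Req_EM_T; [lra | congruence]|].
      apply sumK_ge_term; auto. }
    split.
    + intros k Hk. apply Rle_mult_inv_pos; [apply HI | exact HZ].
    + unfold Rdiv. rewrite (sumK_ext K _ (fun k => / sumK K I * I k)) by (intros; apply Rmult_comm).
      rewrite sumK_scal. field. lra.
Qed.

Lemma ew_weight_ftl_support K L k : ew_weight K None L k = 0 \/ L k = minK K L.
Proof. simpl. destruct Req_EM_T; [right; auto | left; unfold Rdiv; ring]. Qed.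

Section Mean.
Variables (K : nat) (w : nat -> R).
Hypothesis Hw : prob_vec K w.

Definition mean (l : nat -> R) : R := sumK K (fun k => w k * l k).

Lemma mean_le f g : (forall k, (k < K)%nat -> f k <= g k) -> mean f <= mean g.
Proof.
  intros H. apply sumK_le. intros k Hk. apply Rmult_le_compat_l; [apply Hw | apply H]; auto.
Qed.

Lemma mean_affine c0 c1 l : mean (fun k => c0 + c1 * l k) = c0 + c1 * mean l.
Proof.
  unfold mean. rewrite <- sumK_scal.
  rewrite (sumK_ext K _ (fun k => c0 * w k + c1 * (w k * l k))) by (intros; ring).
  rewrite sumK_plus, sumK_scal, sumK_scal, (proj2 Hw). ring.
Qed.

Lemma mean_const c : mean (fun _ => c) = c.
Proof.
  unfold mean. rewrite (sumK_ext K _ (fun k => c * w k)) by (intros; ring).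
  rewrite sumK_scal, (proj2 Hw). ring.
Qed.

Lemma mean_scal c l : mean (fun k => c * l k) = c * mean l.
Proof.
  unfold mean. rewrite <- sumK_scal. apply sumK_ext. intros; ring.
Qed.

Lemma mean_bounds l a b : (forall k, (k < K)%nat -> a <= l k <= b) -> a <= mean l <= b.
Proof.
  intros H. split.
  - apply Rle_trans with (mean (fun _ => a)); [rewrite mean_const; lra|].
    apply mean_le. apply H.
  - apply Rle_trans with (mean (fun _ => b)); [|rewrite mean_const; lra].
    apply mean_le. apply H.
Qed.

Lemma exp_mean_le l : exp (mean l) <= mean (fun k => exp (l k)).
Proof.
  set (m := mean l).
  apply Rle_trans with (mean (fun k => exp m * (1 - m) + exp m * l k)).
  - rewrite mean_affine. fold m. right; ring.
  - apply mean_le. intros k _. pose proof (exp_ge_tangent m (l k)). lra.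
Qed.

Lemma mean_exp_centered_le l e :
  (forall k, (k < K)%nat -> 0 <= l k <= 1) -> 0 < e < 3 ->
  mean (fun k => exp (e * (mean l - l k)))
    <= 1 + e ^ 2 / (2 * (1 - e / 3)) * (mean l * (1 - mean l)).
Proof.
  intros Hl He. set (h := mean l). set (g := / (2 * (1 - e / 3))).
  assert (Hh : 0 <= h <= 1) by (apply mean_bounds; auto).
  assert (Hg : 0 < g) by (apply Rinv_0_lt_compat; lra).
  (* the quadratic bound on [exp] is affine in [l k], because [l k ^ 2 <= l k] *)
  apply Rle_trans with
    (mean (fun k => (1 + e * h + e ^ 2 * g * h ^ 2) + (e ^ 2 * g - e - 2 * e ^ 2 * g * h) * l k)).
  - apply mean_le. intros k Hk. specialize (Hl k Hk).
    eapply Rle_trans; [apply (exp_le_bernstein_upto e); [lra | nra]|].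
    replace ((e * (h - l k)) ^ 2 / (2 * (1 - e / 3))) with (e ^ 2 * g * (h - l k) ^ 2)
      by (unfold g; field; lra).
    assert (e ^ 2 * g * (h - l k) ^ 2 <= e ^ 2 * g * (h ^ 2 - 2 * h * l k + l k)).
    { apply Rmult_le_compat_l; nra. }
    apply Rle_trans with (1 + e * (h - l k) + e ^ 2 * g * (h ^ 2 - 2 * h * l k + l k));
      [lra | right; ring].
  - rewrite mean_affine. fold h. right. unfold g. field. lra.
Qed.

Section MixGap.
Variables (l : nat -> R) (e : R).
Hypotheses (Hl : forall k, (k < K)%nat -> 0 <= l k <= 1) (He : 0 < e).

Let A := mean (fun k => exp (- e * l k)).

Lemma mean_exp_neg_bounds : exp (- e * mean l) <= A <= 1.
Proof.
  split.
  - rewrite <- mean_scal. apply exp_mean_le.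
  - apply Rle_trans with (mean (fun _ => 1)); [|rewrite mean_const; lra].
    apply mean_le. intros k Hk. rewrite <- exp_0. apply exp_le_compat.
    specialize (Hl k Hk). nra.
Qed.

Lemma mix_gap_bounds : 0 < A /\ 0 <= mean l + ln A / e <= mean l.
Proof.
  destruct mean_exp_neg_bounds as [Hlo Hhi].
  assert (HA : 0 < A) by (eapply Rlt_le_trans; [apply exp_pos | exact Hlo]).
  assert (Hln_lo : - e * mean l <= ln A).
  { rewrite <- (ln_exp (- e * mean l)). apply ln_le_compat; [apply exp_pos | exact Hlo]. }
  assert (Hln_hi : ln A <= 0) by (rewrite <- ln_1; apply ln_le_compat; auto).
  assert (Hq : ln A = ln A / e * e) by (field; lra).
  split; [exact HA | nra].
Qed.

Lemma mix_gap_bernstein :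
  (mean l + ln A / e) * (1 - e / 3) <= e * (mean l * (1 - mean l)) / 2.
Proof.
  set (h := mean l).
  destruct mix_gap_bounds as [HA Hgap]. fold h in Hgap.
  assert (Hh : 0 <= h <= 1) by (apply mean_bounds; auto).
  assert (Hv : 0 <= e * (h * (1 - h))) by (apply Rmult_le_pos; nra).
  destruct (Rle_dec 3 e) as [He3 | He3].
  { assert ((h + ln A / e) * (e / 3 - 1) >= 0) by (apply Rle_ge, Rmult_le_pos; lra). lra. }
  set (B := mean (fun k => exp (e * (h - l k)))).
  assert (HAB : A = exp (- e * h) * B).
  { unfold A, B. rewrite <- mean_scal. apply sumK_ext. intros k _.
    rewrite <- exp_plus. f_equal. f_equal. ring. }
  assert (HB : B <= 1 + e ^ 2 / (2 * (1 - e / 3)) * (h * (1 - h)))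
    by (apply mean_exp_centered_le; auto; lra).
  assert (HB0 : 0 < B) by (pose proof (exp_pos (- e * h)); nra).
  assert (Hgap_eq : h + ln A / e = ln B / e).
  { rewrite HAB, ln_mult, ln_exp by (auto; apply exp_pos). field. lra. }
  pose proof (ln_le_sub1 B HB0) as HlnB.
  rewrite Hgap_eq.
  replace (ln B / e * (1 - e / 3)) with (ln B * ((1 - e / 3) / e)) by (field; lra).
  replace (e * (h * (1 - h)) / 2)
    with (e ^ 2 / (2 * (1 - e / 3)) * (h * (1 - h)) * ((1 - e / 3) / e)) by (field; lra).
  apply Rmult_le_compat_r; [apply Rle_mult_inv_pos | ]; lra.
Qed.

End MixGap.
End Mean.

(** * The mixability gap of one round *)

Section OneRound.
Variables (K : nat) (loss : nat -> nat -> R) (t : nat).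
Hypotheses (HK : (1 <= K)%nat) (Hloss : forall k, (k < K)%nat -> 0 <= loss t k <= 1).

Lemma hloss_bounds r : 0 <= hloss K loss r t <= 1.
Proof. exact (mean_bounds K _ (ew_weight_prob_vec K r _ HK) _ 0 1 Hloss). Qed.

Section FiniteRate.
Variables (e : R).
Hypothesis He : 0 < e.

Let w := ew_weight K (Some e) (cumL loss (t - 1)).

Lemma mixgap_rate_eq :
  mixgap K loss (Some e) t = mean K w (loss t) + ln (mean K w (fun k => exp (- e * loss t k))) / e.
Proof.
  unfold mixgap, mixloss. destruct (Req_EM_T e 0); [lra|]. unfold hloss, mean. fold w.
  field. lra.
Qed.

Lemma mixgap_rate_bounds : 0 <= mixgap K loss (Some e) t <= 1.
Proof.
  rewrite mixgap_rate_eq.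
  destruct (mix_gap_bounds K w (ew_weight_prob_vec K _ _ HK) (loss t) e Hloss He) as [_ Hgap].
  pose proof (mean_bounds K w (ew_weight_prob_vec K _ _ HK) _ 0 1 Hloss). lra.
Qed.

Lemma mixgap_rate_bernstein :
  mixgap K loss (Some e) t * (1 - e / 3)
    <= e * (hloss K loss (Some e) t * (1 - hloss K loss (Some e) t)) / 2.
Proof.
  rewrite mixgap_rate_eq.
  exact (mix_gap_bernstein K w (ew_weight_prob_vec K _ _ HK) (loss t) e Hloss He).
Qed.

End FiniteRate.

Lemma mixgap_ftl_bounds : (1 <= t)%nat -> 0 <= mixgap K loss None t <= 1.
Proof.
  intros Ht. destruct t as [|u]; [lia|].
  set (w := ew_weight K None (cumL loss u)).
  assert (Hw : prob_vec K w) by apply ew_weight_prob_vec, HK.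
  unfold mixgap, mixloss, hloss, Lstar. replace (S u - 1)%nat with u by lia. fold w.
  change (sumK K (fun k => w k * loss (S u) k)) with (mean K w (loss (S u))).
  set (d := minK K (cumL loss (S u)) - minK K (cumL loss u)).
  assert (Hd0 : 0 <= d).
  { enough (minK K (cumL loss u) <= minK K (cumL loss (S u))) by (unfold d; lra).
    apply minK_glb; auto. intros k Hk. simpl. pose proof (minK_le K (cumL loss u) k Hk).
    specialize (Hloss k Hk). lra. }
  (* only leaders carry weight, and a leader's loss is at least the increase of [L*] *)
  assert (Hdh : d <= mean K w (loss (S u))).
  { rewrite <- (mean_const K w Hw d). apply sumK_le. intros k Hk.
    destruct (ew_weight_ftl_support K (cumL loss u) k) as [E | E]; fold w in E; [rewrite E; lra|].
    apply Rmult_le_compat_l; [apply Hw; auto|].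
    pose proof (minK_le K (cumL loss (S u)) k Hk) as Hmin.
    change (cumL loss (S u) k) with (cumL loss u k + loss (S u) k) in Hmin. unfold d. lra. }
  pose proof (mean_bounds K w Hw _ 0 1 Hloss). lra.
Qed.

Lemma mixgap_bounds r : (1 <= t)%nat -> (forall e, r = Some e -> 0 < e) ->
  0 <= mixgap K loss r t <= 1.
Proof.
  intros Ht Hr. destruct r as [e|].
  - apply mixgap_rate_bounds, Hr. reflexivity.
  - apply mixgap_ftl_bounds, Ht.
Qed.

End OneRound.

Lemma Lstar_0 K loss : (1 <= K)%nat -> Lstar K loss 0 = 0.
Proof.
  intros HK. unfold Lstar. destruct (minK_attained K (cumL loss 0) HK) as [j [_ ->]]. reflexivity.
Qed.

Lemma regret_ftl_gaps K loss T : (1 <= K)%nat -> regret_ftl K loss T = sumT T (mixgap K loss None).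
Proof.
  intros HK. unfold regret_ftl.
  enough (sumT T (fun t => hloss K loss None t) = sumT T (mixgap K loss None) + Lstar K loss T)
    by lra.
  induction T as [|T IH]; [rewrite Lstar_0 by auto; unfold sumT; simpl; lra|].
  rewrite !sumT_S, IH. unfold mixgap, mixloss. rewrite Nat.sub_succ, Nat.sub_0_r. ring.
Qed.

(** * The exponential-weights potential *)

(* At [eta = infinity] ([None]) the potential is its limit [min_k L_k]. *)
Definition ew_potential (K : nat) (r : lrate) (L : nat -> R) : R :=
  match r with
  | None => minK K L
  | Some e => - (1 / e) * ln (sumK K (fun k => exp (- e * L k)) / INR K)
  end.

Lemma ln_div x y : 0 < x -> 0 < y -> ln (x / y) = ln x - ln y.
Proof.
  intros Hx Hy. unfold Rdiv.
  rewrite ln_mult, ln_Rinv; [ring | auto | auto | apply Rinv_0_lt_compat; auto].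
Qed.

Lemma opp_div_le e X Y : 0 < e -> X <= Y -> - (1 / e) * Y <= - (1 / e) * X.
Proof.
  intros He H. assert (0 < 1 / e) by (apply Rdiv_lt_0_compat; lra).
  apply Ropp_le_cancel. rewrite !Ropp_mult_distr_l_reverse, !Ropp_involutive.
  apply Rmult_le_compat_l; lra.
Qed.

Section Potential.
Variable K : nat.
Hypothesis HK : (1 <= K)%nat.

Lemma ew_potential_bounds e L : 0 < e ->
  minK K L <= ew_potential K (Some e) L <= minK K L + ln (INR K) / e.
Proof.
  intros He. simpl.
  set (m := minK K L). set (Z := sumK K (fun k => exp (- e * L k))).
  assert (HKpos : 0 < INR K) by (apply lt_0_INR; lia).
  destruct (minK_attained K L HK) as [j [Hj Ej]]. fold m in Ej.
  assert (Hlo : exp (- e * m) <= Z).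
  { rewrite Ej. apply (sumK_ge_term K (fun k => exp (- e * L k))); auto.
    intros; left; apply exp_pos. }
  assert (Hhi : Z <= INR K * exp (- e * m)).
  { rewrite <- sumK_const. apply sumK_le. intros k Hk. apply exp_le_compat.
    pose proof (minK_le K L k Hk) as Hm. fold m in Hm. nra. }
  assert (HZ : 0 < Z) by (eapply Rlt_le_trans; [apply exp_pos | eauto]).
  assert (Hln_lo : - e * m <= ln Z).
  { rewrite <- (ln_exp (- e * m)). apply ln_le_compat; auto. apply exp_pos. }
  assert (Hln_hi : ln Z <= - e * m + ln (INR K)).
  { rewrite <- (ln_exp (- e * m)), <- ln_mult by (auto; apply exp_pos).
    apply ln_le_compat; auto. lra. }
  rewrite ln_div by auto. split.
  - replace m with (- (1 / e) * (- e * m)) at 1 by (field; lra). apply opp_div_le; lra.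
  - replace (m + ln (INR K) / e) with (- (1 / e) * (- e * m - ln (INR K))) by (field; lra).
    apply opp_div_le; lra.
Qed.

(* A power-mean inequality, from the chord bound on [exp]. *)
Lemma ln_mean_exp_scale (x : nat -> R) p : 0 < p <= 1 ->
  ln (sumK K (fun k => exp (p * x k)) / INR K) <= p * ln (sumK K (fun k => exp (x k)) / INR K).
Proof.
  intros Hp.
  assert (HKpos : 0 < INR K) by (apply lt_0_INR; lia).
  set (Z := sumK K (fun k => exp (x k))). set (M := ln (Z / INR K)).
  assert (HZ : 0 < Z) by apply (sumK_exp_pos K x HK).
  assert (HeM : exp M = Z / INR K) by (apply exp_ln, Rdiv_lt_0_compat; auto).
  assert (Hpoint : forall k,
    exp (p * x k) <= exp (p * M) * (1 - p) + exp (p * M) * p / exp M * exp (x k)).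
  { intro k.
    replace (exp (p * x k)) with (exp (p * M) * exp (p * (x k - M)))
      by (rewrite <- exp_plus; f_equal; ring).
    pose proof (exp_le_chord p (x k - M) ltac:(lra)) as Hchord.
    replace (exp (x k - M)) with (exp (x k) * / exp M) in Hchord
      by (unfold Rminus; rewrite exp_plus, exp_Ropp; reflexivity).
    apply Rle_trans with (exp (p * M) * (1 + p * (exp (x k) * / exp M - 1))).
    - apply Rmult_le_compat_l; [left; apply exp_pos | exact Hchord].
    - right. field. apply exp_neq_0. }
  assert (Hsum : sumK K (fun k => exp (p * x k)) <= INR K * exp (p * M)).
  { eapply Rle_trans; [apply (sumK_le K _ _ (fun k _ => Hpoint k))|].
    rewrite sumK_plus, sumK_const, sumK_scal. fold Z. rewrite HeM.
    right. field. lra. }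
  rewrite <- (ln_exp (p * M)). apply ln_le_compat.
  - apply Rdiv_lt_0_compat; auto. apply (sumK_exp_pos K (fun k => p * x k) HK).
  - apply Rmult_le_reg_r with (INR K); auto. unfold Rdiv. rewrite Rmult_assoc, Rinv_l by lra. lra.
Qed.

Lemma ew_potential_antitone e1 e2 L : 0 < e1 <= e2 ->
  ew_potential K (Some e2) L <= ew_potential K (Some e1) L.
Proof.
  intros He. simpl.
  set (p := e1 / e2).
  assert (Hp : 0 < p <= 1).
  { unfold p. split; [apply Rdiv_lt_0_compat; lra|].
    apply Rmult_le_reg_r with e2; [lra|]. unfold Rdiv. rewrite Rmult_assoc, Rinv_l by lra. lra. }
  pose proof (ln_mean_exp_scale (fun k => - e2 * L k) p Hp) as Hscale. cbv beta in Hscale.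
  rewrite (sumK_ext K (fun k => exp (p * (- e2 * L k))) (fun k => exp (- e1 * L k))) in Hscale
    by (intros; f_equal; unfold p; field; lra).
  replace (- (1 / e2) * ln (sumK K (fun k => exp (- e2 * L k)) / INR K))
    with (- (1 / e1) * (p * ln (sumK K (fun k => exp (- e2 * L k)) / INR K)))
    by (unfold p; field; lra).
  apply opp_div_le; lra.
Qed.

Lemma mixloss_potential_diff loss r t : (1 <= t)%nat -> (forall e, r = Some e -> 0 < e) ->
  mixloss K loss r t = ew_potential K r (cumL loss t) - ew_potential K r (cumL loss (t - 1)).
Proof.
  intros Ht Hr. destruct t as [|u]; [lia|]. replace (S u - 1)%nat with u by lia.
  unfold mixloss, Lstar. replace (S u - 1)%nat with u by lia.
  destruct r as [e|]; [|reflexivity].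
  specialize (Hr e eq_refl). destruct (Req_EM_T e 0) as [E|_]; [lra|]. simpl ew_potential.
  assert (HKpos : 0 < INR K) by (apply lt_0_INR; lia).
  set (Z0 := sumK K (fun k => exp (- e * cumL loss u k))).
  set (Z1 := sumK K (fun k => exp (- e * cumL loss (S u) k))).
  assert (HZ0 : 0 < Z0) by apply (sumK_exp_pos K (fun k => - e * cumL loss u k) HK).
  assert (HZ1 : 0 < Z1) by apply (sumK_exp_pos K (fun k => - e * cumL loss (S u) k) HK).
  rewrite (sumK_ext K _ (fun k => / Z0 * exp (- e * cumL loss (S u) k))).
  2:{ intros k Hk. unfold ew_weight. fold Z0. simpl cumL.
      rewrite Rmult_plus_distr_l, exp_plus. unfold Rdiv. ring. }
  rewrite sumK_scal. fold Z1.
  change (sumK K (fun k => exp (- e * (cumL loss u k + loss (S u) k)))) with Z1.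
  rewrite !ln_div, ln_mult, ln_Rinv by (auto; apply Rinv_0_lt_compat; auto).
  field. lra.
Qed.

End Potential.

(** * FlipFlop *)

Definition ff_next (phi alpha : R) (s : ffstate) (d : R) : ffstate :=
  if ff_flip s then
    if Rlt_dec (phi / alpha * ff_dflop s) (ff_dflip s + d)
    then FFState false (ff_dflip s + d) (ff_dflop s)
    else FFState true (ff_dflip s + d) (ff_dflop s)
  else
    if Rlt_dec (alpha * ff_dflip s) (ff_dflop s + d)
    then FFState true (ff_dflip s) (ff_dflop s + d)
    else FFState false (ff_dflip s) (ff_dflop s + d).

Lemma ff_next_sum phi alpha s d :
  ff_dflip (ff_next phi alpha s d) + ff_dflop (ff_next phi alpha s d) = ff_dflip s + ff_dflop s + d.
Proof. unfold ff_next. destruct (ff_flip s), Rlt_dec; simpl; ring. Qed.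

Lemma ff_next_dflop_nonneg phi alpha s d :
  0 <= ff_dflop s -> 0 <= d -> 0 <= ff_dflop (ff_next phi alpha s d).
Proof. unfold ff_next. destruct (ff_flip s), Rlt_dec; simpl; lra. Qed.

(* How far the potential at FlipFlop's next rate can exceed [L*]. *)
Definition ff_excess (s : ffstate) : R := if ff_flip s then 0 else ff_dflop s.

Section Rates.
Variable K : nat.
Hypothesis HK : (2 <= K)%nat.

Lemma ln_K_pos : 0 < ln (INR K).
Proof. rewrite <- ln_1. apply ln_increasing; [lra|]. apply (lt_INR 1). lia. Qed.

Lemma ff_eta_pos s : 0 <= ff_dflop s -> forall e, ff_eta K s = Some e -> 0 < e.
Proof.
  intros HG e. unfold ff_eta. destruct (ff_flip s); [discriminate|].
  destruct Req_EM_T as [|HG0]; [discriminate|]. intros [= <-].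
  apply Rdiv_lt_0_compat; [apply ln_K_pos | lra].
Qed.

Lemma ew_potential_ff_eta s L : 0 <= ff_dflop s ->
  minK K L <= ew_potential K (ff_eta K s) L <= minK K L + ff_excess s.
Proof.
  intros HG. unfold ff_eta, ff_excess. destruct (ff_flip s); [simpl; lra|].
  destruct Req_EM_T as [HG0 | HG0]; [simpl; lra|].
  assert (He : 0 < ln (INR K) / ff_dflop s) by (apply Rdiv_lt_0_compat; [apply ln_K_pos | lra]).
  pose proof (ew_potential_bounds K ltac:(lia) _ L He) as Hb.
  replace (ln (INR K) / (ln (INR K) / ff_dflop s)) with (ff_dflop s) in Hb
    by (pose proof ln_K_pos; field; lra).
  exact Hb.
Qed.

Lemma ew_potential_ff_next phi alpha s d L : 0 <= ff_dflop s -> 0 <= d ->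
  ew_potential K (ff_eta K s) L - ew_potential K (ff_eta K (ff_next phi alpha s d)) L
    <= if ff_flip (ff_next phi alpha s d) then ff_excess s else 0.
Proof.
  intros HG Hd. set (s' := ff_next phi alpha s d).
  assert (HG' : 0 <= ff_dflop s') by (apply ff_next_dflop_nonneg; auto).
  pose proof (ew_potential_ff_eta s L HG) as [Hlo Hhi].
  pose proof (ew_potential_ff_eta s' L HG') as [Hlo' Hhi'].
  destruct (ff_flip s') eqn:Hflip'; [lra|].
  enough (ew_potential K (ff_eta K s) L <= ew_potential K (ff_eta K s') L) by lra.
  destruct s as [[] F G]; [simpl; lra|]. simpl in HG.
  assert (Es' : s' = FFState false F (G + d)).
  { unfold s', ff_next in Hflip' |- *. simpl in *. destruct Rlt_dec; [discriminate | reflexivity]. }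
  rewrite Es' in Hlo' |- *.
  unfold ff_eta at 1. simpl. destruct (Req_EM_T G 0) as [HG0 | HG0]; [exact Hlo'|].
  unfold ff_eta. simpl. destruct (Req_EM_T (G + d) 0); [lra|].
  pose proof ln_K_pos.
  apply ew_potential_antitone; [lia|]. split.
  - apply Rdiv_lt_0_compat; lra.
  - unfold Rdiv. apply Rmult_le_compat_l; [lra|]. apply Rinv_le_contravar; lra.
Qed.

End Rates.

(* The regime invariants of FlipFlop with [phi = 2.37], [alpha = 1.243]; the constants are
   [phi / alpha = 2370/1243], [phi / (phi - 1) = 237/137] and [alpha / (phi - 1) = 1243/1370].
   [X] is the excess of the mix loss over the potential at the next rate, [W] the sum of the
   variances [h_t (1 - h_t)], and [Dftl] the sum of the mixability gaps of FTL. *)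
Definition ff_invariant (lam : R) (s : ffstate) (X W Dftl : R) : Prop :=
  0 <= ff_dflip s /\ 0 <= ff_dflop s /\ ff_dflip s <= Dftl /\
  X <= 237 / 137 * ff_dflop s /\
  ff_dflop s ^ 2 <= lam * W + (2 * lam / 3 + 1) * ff_dflop s /\
  if ff_flip s
  then ff_dflip s <= 2370 / 1243 * ff_dflop s /\ ff_dflop s <= 1243 / 1000 * ff_dflip s + 1
  else ff_dflop s <= 1243 / 1000 * ff_dflip s /\ ff_dflip s <= 2370 / 1243 * ff_dflop s + 1 /\
       X <= 1243 / 1370 * ff_dflip s.

Lemma ff_invariant_init lam : 0 <= lam -> ff_invariant lam (FFState true 0 0) 0 0 0.
Proof. intros Hlam. unfold ff_invariant; simpl. repeat split; lra. Qed.

Lemma ff_invariant_next lam s d dftl v c X W Dftl :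
  0 <= lam -> 0 <= v -> 0 <= d <= 1 -> 0 <= dftl ->
  (ff_flip s = true -> d = dftl) ->
  (ff_flip s = false -> 2 * ff_dflop s * d <= lam * v + 2 * lam / 3 * d) ->
  c <= (if ff_flip (ff_next (237 / 100) (1243 / 1000) s d) then ff_excess s else 0) ->
  ff_invariant lam s X W Dftl ->
  ff_invariant lam (ff_next (237 / 100) (1243 / 1000) s d) (X + c) (W + v) (Dftl + dftl).
Proof.
  (* A switch to flop needs [Delta^flip > (phi/alpha) Delta^flop], which turns the bound
     [X <= phi/(phi-1) Delta^flop] into [X <= alpha/(phi-1) Delta^flip]; a switch back raises
     [X] by at most [Delta^flop] while [Delta^flop] jumps above [alpha Delta^flip].  The [+ 1]
     slacks absorb the single gap [d <= 1] that triggers a switch. *)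
  intros Hlam Hv Hd Hdftl Hflip Hflop Hc.
  assert (Hlv : 0 <= lam * v) by (apply Rmult_le_pos; auto).
  destruct s as [[] F G]; unfold ff_invariant, ff_next, ff_excess in *; simpl in *;
    intros (HF & HG & HFD & HX & HG2 & Hregime);
    destruct Rlt_dec as [Hswitch | Hstay]; simpl in *.
  - specialize (Hflip eq_refl). repeat split; nra.
  - specialize (Hflip eq_refl). repeat split; nra.
  - specialize (Hflop eq_refl). repeat split; nra.
  - specialize (Hflop eq_refl). repeat split; nra.
Qed.

Section FlipFlopRun.
Variables (K T : nat) (loss : nat -> nat -> R).
Hypothesis HK : (2 <= K)%nat.
Hypothesis Hloss : forall t k, (1 <= t <= T)%nat -> (k < K)%nat -> 0 <= loss t k <= 1.

Definition ff_run (t : nat) : ffstate := ff_state K (237 / 100) (1243 / 1000) loss t.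

Definition ff_loss (t : nat) : R := hloss K loss (ff_rate K (237 / 100) (1243 / 1000) loss t) t.

Definition ff_gap (t : nat) : R := mixgap K loss (ff_rate K (237 / 100) (1243 / 1000) loss t) t.

Definition ff_mix_excess (t : nat) : R :=
  sumT t (fun u => mixloss K loss (ff_rate K (237 / 100) (1243 / 1000) loss u) u)
  - ew_potential K (ff_eta K (ff_run t)) (cumL loss t).

Definition ff_variance (t : nat) : R := sumT t (fun u => ff_loss u * (1 - ff_loss u)).

Lemma ff_run_S t :
  ff_run (S t)
  = ff_next (237 / 100) (1243 / 1000) (ff_run t) (mixgap K loss (ff_eta K (ff_run t)) (S t)).
Proof. reflexivity. Qed.

Lemma ff_rate_S t : ff_rate K (237 / 100) (1243 / 1000) loss (S t) = ff_eta K (ff_run t).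
Proof. unfold ff_rate, ff_run. rewrite Nat.sub_succ, Nat.sub_0_r. reflexivity. Qed.

Lemma ff_gaps_sum t : sumT t ff_gap = ff_dflip (ff_run t) + ff_dflop (ff_run t).
Proof.
  induction t as [|t IH]; [unfold sumT; simpl; lra|].
  rewrite sumT_S, IH, ff_run_S, ff_next_sum. unfold ff_gap. rewrite ff_rate_S. reflexivity.
Qed.

Lemma regret_ff_decomposition :
  regret_ff K (237 / 100) (1243 / 1000) loss T
  = ff_mix_excess T + ew_potential K (ff_eta K (ff_run T)) (cumL loss T)
    + ff_dflip (ff_run T) + ff_dflop (ff_run T) - Lstar K loss T.
Proof.
  unfold regret_ff, ff_mix_excess.
  rewrite (sumT_ext T _ (fun t => mixloss K loss (ff_rate K (237 / 100) (1243 / 1000) loss t) t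
                                  + ff_gap t)) by (intros; unfold ff_gap, mixgap; ring).
  rewrite sumT_plus, ff_gaps_sum. ring.
Qed.

Section Step.
Variable t : nat.
Hypothesis Ht : (t < T)%nat.
Hypothesis HG : 0 <= ff_dflop (ff_run t).

Let r := ff_eta K (ff_run t).

Lemma loss_next_bounds : forall k, (k < K)%nat -> 0 <= loss (S t) k <= 1.
Proof. intros k Hk. apply Hloss; [lia | auto]. Qed.

Lemma ff_mix_excess_S :
  ff_mix_excess (S t) = ff_mix_excess t
    + (ew_potential K r (cumL loss (S t))
       - ew_potential K (ff_eta K (ff_run (S t))) (cumL loss (S t))).
Proof.
  unfold ff_mix_excess. rewrite sumT_S, ff_rate_S. fold r.
  rewrite (mixloss_potential_diff K ltac:(lia) loss r (S t)); [|lia | apply ff_eta_pos; auto].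
  rewrite Nat.sub_succ, Nat.sub_0_r. ring.
Qed.

(* Bernstein's bound at the flop rate [ln K / Delta^flop]; when [Delta^flop = 0] the rate is
   infinite and the bound is trivial. *)
Lemma ff_flop_gap_bound :
  ff_flip (ff_run t) = false ->
  2 * ff_dflop (ff_run t) * mixgap K loss r (S t)
    <= ln (INR K) * (hloss K loss r (S t) * (1 - hloss K loss r (S t)))
       + 2 * ln (INR K) / 3 * mixgap K loss r (S t).
Proof.
  intros Hflop. pose proof (ln_K_pos K HK) as Hlam.
  pose proof (hloss_bounds K loss (S t) ltac:(lia) loss_next_bounds r) as Hh.
  pose proof (mixgap_bounds K loss (S t) ltac:(lia) loss_next_bounds r ltac:(lia)
    (ff_eta_pos K HK _ HG)) as Hd.
  assert (Hv : 0 <= ln (INR K) * (hloss K loss r (S t) * (1 - hloss K loss r (S t))))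
    by (apply Rmult_le_pos; nra).
  unfold r, ff_eta in *. rewrite Hflop in *.
  destruct Req_EM_T as [HG0 | HG0]; [rewrite HG0; nra|].
  set (G := ff_dflop (ff_run t)) in *.
  assert (He : 0 < ln (INR K) / G) by (apply Rdiv_lt_0_compat; lra).
  apply bernstein_rescale; [lra|].
  exact (mixgap_rate_bernstein K loss (S t) ltac:(lia) loss_next_bounds _ He).
Qed.

End Step.

Lemma ff_invariant_run t : (t <= T)%nat ->
  ff_invariant (ln (INR K)) (ff_run t) (ff_mix_excess t) (ff_variance t)
    (sumT t (mixgap K loss None)).
Proof.
  pose proof (ln_K_pos K HK) as Hlam.
  induction t as [|t IH]; intros Ht.
  - replace (ff_mix_excess 0) with 0.
    2:{ unfold ff_mix_excess. change (0 = 0 - Lstar K loss 0). rewrite Lstar_0 by lia. ring. }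
    apply ff_invariant_init. lra.
  - specialize (IH ltac:(lia)).
    assert (HG : 0 <= ff_dflop (ff_run t)) by apply IH.
    set (r := ff_eta K (ff_run t)).
    assert (Hr := ff_eta_pos K HK _ HG). fold r in Hr.
    pose proof (loss_next_bounds t Ht) as Hl.
    pose proof (hloss_bounds K loss (S t) ltac:(lia) Hl r) as Hh.
    rewrite (ff_mix_excess_S t Ht HG). fold r.
    unfold ff_variance. rewrite !sumT_S. fold (ff_variance t).
    unfold ff_loss. rewrite ff_rate_S. fold r.
    rewrite ff_run_S. fold r.
    apply ff_invariant_next; auto.
    + lra.
    + nra.
    + apply mixgap_bounds; auto; lia.
    + apply mixgap_ftl_bounds; auto; lia.
    + intros Hflip. unfold r, ff_eta. rewrite Hflip. reflexivity.
    + apply ff_flop_gap_bound; auto.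
    + apply ew_potential_ff_next; auto. apply mixgap_bounds; auto; lia.
Qed.

Lemma Lstar_bounds : 0 <= Lstar K loss T <= INR T.
Proof.
  assert (Hcum : forall t k, (t <= T)%nat -> (k < K)%nat -> 0 <= cumL loss t k <= INR t).
  { intros t k Ht Hk. induction t as [|t IH]; simpl cumL; [simpl; lra|].
    rewrite S_INR. pose proof (Hloss (S t) k ltac:(lia) Hk). pose proof (IH ltac:(lia)). lra. }
  unfold Lstar. split.
  - apply minK_glb; [lia|]. intros k Hk. apply Hcum; auto.
  - apply Rle_trans with (cumL loss T 0); [apply minK_le; lia | apply Hcum; lia].
Qed.

Lemma ff_regret_bounds :
  regret_ff K (237 / 100) (1243 / 1000) loss T <= 564 / 100 * regret_ftl K loss T + 464 / 100 /\
  regret_ff K (237 / 100) (1243 / 1000) loss T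
    <= (237 / 137 + 2370 / 1243 + 2) * ff_dflop (ff_run T) + 1.
Proof.
  destruct (ff_invariant_run T (le_n T)) as (HF & HG & HFD & HX & _ & Hregime).
  pose proof (ew_potential_ff_eta K HK (ff_run T) (cumL loss T) HG) as [Hlo Hhi].
  change (minK K (cumL loss T)) with (Lstar K loss T) in Hlo, Hhi.
  rewrite regret_ff_decomposition, (regret_ftl_gaps K loss T) by lia.
  unfold ff_excess in Hhi. destruct (ff_flip (ff_run T)).
  - destruct Hregime as (HFG & HGF). split; lra.
  - destruct Hregime as (HGF & HFG & HXF). split; lra.
Qed.

Lemma ff_variance_le : (1 <= T)%nat -> 0 <= regret_ff K (237 / 100) (1243 / 1000) loss T ->
  ff_variance T <= Lstar K loss T * (INR T - Lstar K loss T) / INR T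
                   + regret_ff K (237 / 100) (1243 / 1000) loss T.
Proof.
  intros HT HR. set (Rg := regret_ff K (237 / 100) (1243 / 1000) loss T) in *.
  set (Ls := Lstar K loss T).
  assert (HTpos : 0 < INR T) by (apply lt_0_INR; lia).
  assert (Hsum : sumT T ff_loss = Rg + Ls) by (unfold Rg, regret_ff, Ls; fold ff_loss; ring).
  pose proof (sumT_variance_le T ff_loss HT) as Hvar. rewrite Hsum in Hvar.
  pose proof Lstar_bounds as HLs. fold Ls in HLs.
  assert (0 <= (Rg * Rg + 2 * Rg * Ls) / INR T) by (apply Rle_mult_inv_pos; nra).
  replace (Rg + Ls - (Rg + Ls) ^ 2 / INR T)
    with (Ls * (INR T - Ls) / INR T + Rg - (Rg * Rg + 2 * Rg * Ls) / INR T) in Hvar by (field; lra).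
  unfold ff_variance. lra.
Qed.

End FlipFlopRun.

Lemma regret_bound_of_quadratic lam S G R W : 0 < lam -> 0 <= S -> 0 <= G ->
  G ^ 2 <= lam * W + (2 * lam / 3 + 1) * G -> W <= S + R ->
  R <= (237 / 137 + 2370 / 1243 + 2) * G + 1 ->
  R <= 564 / 100 * sqrt (S * lam) + 3553 / 100 * lam + 778 / 100 * sqrt lam + 754 / 100.
Proof.
  intros Hlam HS HG HG2 HW HRG.
  set (a := 237 / 137 + 2370 / 1243 + 2) in *.
  assert (HGq : G ^ 2 <= (S * lam + lam) + (a * lam + 2 * lam / 3 + 1) * G).
  { assert (lam * W <= lam * (S + R)) by (apply Rmult_le_compat_l; lra).
    assert (lam * R <= lam * (a * G + 1)) by (apply Rmult_le_compat_l; lra).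
    unfold a in *. nra. }
  apply quadratic_root_bound in HGq; [|nra | unfold a; lra].
  pose proof (sqrt_add_le (S * lam) lam ltac:(nra) ltac:(lra)).
  pose proof (sqrt_pos (S * lam)). pose proof (sqrt_pos lam).
  assert (a * G <= a * (a * lam + 2 * lam / 3 + 1 + sqrt (S * lam) + sqrt lam))
    by (apply Rmult_le_compat_l; [unfold a | ]; lra).
  unfold a in *. lra.
Qed.

Lemma flipflop_regret_bounds K T loss : (2 <= K)%nat -> (1 <= T)%nat ->
  (forall t k, (1 <= t <= T)%nat -> (k < K)%nat -> 0 <= loss t k <= 1) ->
  regret_ff K (237 / 100) (1243 / 1000) loss T <= 564 / 100 * regret_ftl K loss T + 464 / 100 /\
  regret_ff K (237 / 100) (1243 / 1000) loss T <=
    564 / 100 * sqrt (Lstar K loss T * (INR T - Lstar K loss T) / INR T * ln (INR K))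
    + 3553 / 100 * ln (INR K) + 778 / 100 * sqrt (ln (INR K)) + 754 / 100.
Proof.
  intros HK HT Hloss.
  destruct (ff_regret_bounds K T loss HK Hloss) as [Hftl HRG].
  split; [exact Hftl|].
  pose proof (ln_K_pos K HK) as Hlam.
  pose proof (sqrt_pos (Lstar K loss T * (INR T - Lstar K loss T) / INR T * ln (INR K))).
  pose proof (sqrt_pos (ln (INR K))).
  destruct (Rle_dec 0 (regret_ff K (237 / 100) (1243 / 1000) loss T)) as [HR | HR]; [|lra].
  destruct (ff_invariant_run K T loss HK Hloss T (le_n T)) as (_ & HG & _ & _ & HG2 & _).
  destruct (Lstar_bounds K T loss HK Hloss) as [HLs0 HLsT].
  assert (HTpos : 0 < INR T) by (apply lt_0_INR; lia).
  apply (regret_bound_of_quadratic _ _ (ff_dflop (ff_run K loss T)) _ (ff_variance K loss T));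
    [exact Hlam | | exact HG | exact HG2 | | exact HRG].
  - apply Rle_mult_inv_pos; nra.
  - apply ff_variance_le; auto.
Qed.

Lemma hloss_one_expert loss r t : hloss 1 loss r t = loss t 0%nat.
Proof.
  destruct (ew_weight_prob_vec 1 r (cumL loss (t - 1)) (le_n 1)) as [_ Hs].
  unfold hloss, sumK in *. simpl in *. rewrite Rplus_0_r in Hs. rewrite Hs. ring.
Qed.

Lemma regret_one_expert loss T (rate : nat -> lrate) :
  sumT T (fun t => hloss 1 loss (rate t) t) - Lstar 1 loss T = 0.
Proof.
  rewrite (sumT_ext T _ (fun t => loss t 0%nat)) by (intros; apply hloss_one_expert).
  unfold Lstar, minK. simpl. rewrite Rmin_left by lra.
  induction T as [|T IH]; [unfold sumT; simpl; lra|]. rewrite sumT_S. simpl cumL. lra.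
Qed.

Theorem corollary15 (K T : nat) (loss : nat -> nat -> R)
  (HK : (1 <= K)%nat) (HT : (1 <= T)%nat)
  (Hloss : forall t k, (1 <= t <= T)%nat -> (k < K)%nat -> 0 <= loss t k <= 1) :
  regret_ff K (237 / 100) (1243 / 1000) loss T
    <= 564 / 100 * regret_ftl K loss T + 464 / 100 /\
  regret_ff K (237 / 100) (1243 / 1000) loss T <=
    564 / 100 * sqrt (Lstar K loss T * (INR T - Lstar K loss T) / INR T * ln (INR K))
    + 3553 / 100 * ln (INR K) + 778 / 100 * sqrt (ln (INR K)) + 754 / 100.
Proof.
  destruct (Nat.eq_dec K 1) as [-> | HK1]; [|apply flipflop_regret_bounds; auto; lia].
  assert (Hff : regret_ff 1 (237 / 100) (1243 / 1000) loss T = 0) by apply regret_one_expert.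
  assert (Hftl : regret_ftl 1 loss T = 0) by exact (regret_one_expert loss T (fun _ => None)).
  rewrite Hff, Hftl. change (INR 1) with 1. rewrite ln_1.
  pose proof (sqrt_pos (Lstar 1 loss T * (INR T - Lstar 1 loss T) / INR T * 0)).
  pose proof (sqrt_pos 0). lra.
Qed.
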